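(* Let $\mathcal{P}$ be a collection of cells and let $[a,b]$ and $[\alpha,\beta]$ be two inner intervals of $\mathcal{P}$, where $c,d$ are the anti-diagonal corners of $[a,b]$ and $\gamma,\delta$ are the anti-diagonal corners of $[\alpha,\beta]$. Suppose $|\{a,b,c,d\}\cap\{\alpha,\beta,\gamma,\delta\}|=2$. Then for every $\mathsf{P}$-order $<^{\mathsf{P}}$ on $V(\mathcal{P})$, the $S$-polynomial $S(f_{a,b},f_{\alpha,\beta})$ reduces to $0$ modulo $\mathcal{G}$ with respect to $<^{\mathsf{P}}_{\mathrm{lex}}$.
   Context: For $a=(i,j), b=(k,l)\in\mathbb{Z}^2$ with $a\le b$ componentwise, the interval $[a,b]=\{(m,n)\in\mathbb{Z}^2: i\le m\le k,\ j\le n\le l\}$; it is proper if $i<k$ and $j<l$, in which case $a,b$ are its diagonal corners and $c=(i,l)$ (upper left), $d=(k,j)$ (lower right) its anti-diagonal corners. A cell is a proper interval $[v,v+(1,1)]$; its vertices are its four corners. A collection of cells $\mathcal{P}$ is a nonempty finite set of cells; $V(\mathcal{P})$ is the set of all vertices of its cells. A proper interval $[a,b]$ is an inner interval of $\mathcal{P}$ if every cell $[v,v+(1,1)]\subseteq[a,b]$ belongs to $\mathcal{P}$. Let $K$ be a field and $S=K[x_v: v\in V(\mathcal{P})]$. For an inner interval $[a,b]$ with anti-diagonal corners $c$ (upper left), $d$ (lower right), put $f_{a,b}=x_ax_b-x_cx_d$ (an inner 2-minor); $\mathcal{G}$ is the set of all inner 2-minors of $\mathcal{P}$. A $\mathsf{P}$-order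 is a total order $<^{\mathsf{P}}$ on $V(\mathcal{P})$; $<^{\mathsf{P}}_{\mathrm{lex}}$ denotes the lexicographic monomial order on $S$ induced by the variable order $x_u<x_v \iff u<^{\mathsf{P}}v$. $S(f,g)$ denotes the $S$-polynomial with respect to this order. *)

From HB Require Import structures.
From mathcomp Require Import all_boot all_order all_algebra.
From mathcomp Require Import mpoly.

Set Implicit Arguments.
Unset Strict Implicit.
Unset Printing Implicit Defensive.

Import Order.TTheory GRing.Theory Num.Theory.
Local Open Scope ring_scope.

Notation pt := (int * int)%type.

(* A cell [v, v+(1,1)] is represented by its lower-left corner v.
   A collection of cells P is represented by the (finite) list of the
   lower-left corners of its cells. *)

Definition cell_vertices (v : pt) : seq pt :=
  [:: v; (v.1 + 1, v.2); (v.1, v.2 + 1); (v.1 + 1, v.2 + 1)].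

Definition VP (P : seq pt) : seq pt := undup (flatten (map cell_vertices P)).

Definition nV (P : seq pt) : nat := size (VP P).

(* The polynomial ring S = K[x_v : v in V(P)]: variable x_v is 'X_i where
   i is the position of v in VP P. *)
Definition Sring (K : fieldType) (P : seq pt) := {mpoly K[nV P]}.

(* The variable x_v (v is expected to lie in V(P); 0 otherwise). *)
Definition xvar (K : fieldType) (P : seq pt) (v : pt) : {mpoly K[nV P]} :=
  match insub (index v (VP P)) with
  | Some i => 'X_i
  | None => 0
  end.

Definition vert_of (P : seq pt) (i : 'I_(nV P)) : pt := nth (0, 0) (VP P) i.

Definition inner_interval (P : seq pt) (a b : pt) : Prop :=
  (a.1 < b.1) /\ (a.2 < b.2) /\
  forall v : pt, a.1 <= v.1 -> v.1 < b.1 -> a.2 <= v.2 -> v.2 < b.2 -> v \in P.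

Definition ul_corner (a b : pt) : pt := (a.1, b.2).
Definition lr_corner (a b : pt) : pt := (b.1, a.2).

Definition fminor (K : fieldType) (P : seq pt) (a b : pt) : {mpoly K[nV P]} :=
  xvar K P a * xvar K P b - xvar K P (ul_corner a b) * xvar K P (lr_corner a b).

Definition inG (K : fieldType) (P : seq pt) (g : {mpoly K[nV P]}) : Prop :=
  exists a b : pt, inner_interval P a b /\ g = @fminor K P a b.

Definition P_order (P : seq pt) (po : rel pt) : Prop :=
  {in VP P, forall u, ~~ po u u} /\
  {in VP P & &, forall u v w, po u v -> po v w -> po u w} /\
  {in VP P &, forall u v, u != v -> po u v || po v u}.

(* Lexicographic order on monomials induced by the variable order x_u < x_v
   iff u <P v: m1 < m2 iff for the largest variable where they differ, the
   exponent in m2 is larger. *)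
Definition lex_lt (P : seq pt) (po : rel pt) (m1 m2 : 'X_{1..nV P}) : bool :=
  [exists i : 'I_(nV P),
     (m1 i < m2 i)%N &&
     [forall j : 'I_(nV P), po (@vert_of P i) (@vert_of P j) ==> (m1 j == m2 j)]].

Definition lex_le (P : seq pt) (po : rel pt) (m1 m2 : 'X_{1..nV P}) : bool :=
  (m1 == m2) || lex_lt po m1 m2.

(* initial (leading) monomial in_<(f) w.r.t. the lex order (the maximum of
   the support; 0 for f = 0) *)
Definition lmon (K : fieldType) (P : seq pt) (po : rel pt)
    (f : {mpoly K[nV P]}) : 'X_{1..nV P} :=
  foldr (fun m acc => if lex_le po acc m then m else acc) 0%MM (msupp f).

Definition lcoef (K : fieldType) (P : seq pt) (po : rel pt)
    (f : {mpoly K[nV P]}) : K := f@_(lmon po f).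

Definition mlcm (n : nat) (m1 m2 : 'X_{1..n}) : 'X_{1..n} :=
  [multinom maxn (m1 i) (m2 i) | i < n].

Definition spoly (K : fieldType) (P : seq pt) (po : rel pt)
    (f g : {mpoly K[nV P]}) : {mpoly K[nV P]} :=
  let w := mlcm (lmon po f) (lmon po g) in
  (lcoef po f)^-1 *: ('X_[w - lmon po f] * f)
  - (lcoef po g)^-1 *: ('X_[w - lmon po g] * g).

Definition init_le (K : fieldType) (P : seq pt) (po : rel pt)
    (h f : {mpoly K[nV P]}) : Prop :=
  h = 0 \/ (f != 0 /\ lex_le po (lmon po h) (lmon po f)).

(* f reduces to 0 modulo G (Herzog--Hibi): f has a standard expression
   f = sum_i u_i g_i with g_i in G and in(u_i g_i) <= in(f) for all i. *)
Definition reduces_to_zero (K : fieldType) (P : seq pt) (po : rel pt)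
    (f : {mpoly K[nV P]}) : Prop :=
  exists s : seq ({mpoly K[nV P]} * {mpoly K[nV P]}),
    (forall p, p \in s -> @inG K P p.2) /\
    f = \sum_(p <- s) p.1 * p.2 /\
    (forall p, p \in s -> init_le po (p.1 * p.2) f).

From HB Require Import structures.
From mathcomp Require Import all_boot all_order all_algebra.
From mathcomp Require Import mpoly.
From mathcomp Require Import ring zify.

Set Implicit Arguments.
Unset Strict Implicit.
Unset Printing Implicit Defensive.

Import Order.TTheory GRing.Theory Num.Theory.
Local Open Scope ring_scope.

(* Two inner intervals with exactly two common corners share an edge, so
   their six corners form a 2 x 3 array of distinct vertices, of which
   f_{a,b} and f_{alpha,beta} are two 2-minors; the third 2-minor belongs to
   the union of the two intervals, which is again an inner interval.  If the
   leading monomials of f = x^L1 - x^T1 and g = x^L2 - x^T2 are coprime, then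
   S(f, g) = x^T2 f - x^T1 g is a standard expression (Buchberger's first
   criterion).  Otherwise both leading monomials contain the same common
   vertex, and S(f, g) is a monomial times the third minor. *)

Section LexOrder.

Variables (P : seq pt) (po : rel pt).
Hypothesis poP : P_order P po.
Local Notation n := (nV P).

Lemma vert_of_in (i : 'I_n) : vert_of i \in VP P.
Proof. by rewrite /vert_of mem_nth. Qed.

Lemma vert_of_inj : injective (@vert_of P).
Proof.
by move=> i j /eqP; rewrite /vert_of nth_uniq ?undup_uniq // => /eqP/val_inj.
Qed.

Lemma po_vert_trans (i j k : 'I_n) :
  po (vert_of i) (vert_of j) -> po (vert_of j) (vert_of k) ->
  po (vert_of i) (vert_of k).
Proof. by have [_ [tr _]] := poP; apply: tr; apply: vert_of_in. Qed.

Lemma lex_lt_irr (m : 'X_{1..n}) : ~~ lex_lt po m m.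
Proof. by apply/existsP=> -[i /andP[]]; rewrite ltnn. Qed.

Lemma lex_lt_trans (m1 m2 m3 : 'X_{1..n}) :
  lex_lt po m1 m2 -> lex_lt po m2 m3 -> lex_lt po m1 m3.
Proof.
have [_ [_ tot]] := poP.
case/existsP=> i /andP[lt12 /forallP eq12] /existsP[j /andP[lt23 /forallP eq23]].
have eq12P k : po (vert_of i) (vert_of k) -> m1 k = m2 k.
  by move=> h; apply/eqP/(implyP (eq12 k)).
have eq23P k : po (vert_of j) (vert_of k) -> m2 k = m3 k.
  by move=> h; apply/eqP/(implyP (eq23 k)).
apply/existsP; case: (eqVneq i j) => [eij|nij].
  subst j; exists i; rewrite (ltn_trans lt12 lt23); apply/forallP=> k; apply/implyP=> h.
  by rewrite eq12P ?eq23P.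
have /orP[pij|pji] := tot _ _ (vert_of_in i) (vert_of_in j)
  (contra_neq (@vert_of_inj i j) nij).
- exists j; rewrite eq12P // lt23; apply/forallP=> k; apply/implyP=> h.
  by rewrite eq12P ?eq23P // (po_vert_trans pij h).
- exists i; rewrite -eq23P // lt12; apply/forallP=> k; apply/implyP=> h.
  by rewrite eq12P ?eq23P // (po_vert_trans pji h).
Qed.

Lemma lex_lt_total (m1 m2 : 'X_{1..n}) :
  m1 != m2 -> lex_lt po m1 m2 || lex_lt po m2 m1.
Proof.
have [irr [_ _]] := poP; move=> ne.
have [i0 Di0] : exists i, m1 i != m2 i.
  apply/existsP; apply: contraR ne => /existsPn eqm.
  by apply/eqP/mnmP=> i; apply/eqP/negPn/eqm.
(* The po-largest differing variable is one with the most po-smaller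
   differing variables. *)
pose below (i : 'I_n) := #|[pred k | (m1 k != m2 k) && po (vert_of k) (vert_of i)]|.
have [i /= Di imax] := @arg_maxnP _ i0 [pred i | m1 i != m2 i] below Di0.
have eqm j : po (vert_of i) (vert_of j) -> m1 j = m2 j.
  move=> pij; apply/eqP/negPn/negP => Dj.
  suff : (below i < below j)%N by rewrite ltnNge imax.
  apply: proper_card; apply/properP; split.
    apply/subsetP=> k; rewrite !inE => /andP[-> pki].
    exact: po_vert_trans pki pij.
  exists i; first by rewrite inE Di pij.
  by rewrite inE (negbTE (irr _ (vert_of_in i))) andbF.
move: Di; rewrite /= neq_ltn => /orP[lt|lt]; apply/orP; [left|right];
  apply/existsP; exists i; rewrite lt; apply/forallP=> j; apply/implyP=> pij.
  by rewrite eqm.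
by rewrite eqm.
Qed.

Lemma lex_le_refl (m : 'X_{1..n}) : lex_le po m m.
Proof. by rewrite /lex_le eqxx. Qed.

Lemma lex_lt_le (m1 m2 : 'X_{1..n}) : lex_lt po m1 m2 -> lex_le po m1 m2.
Proof. by rewrite /lex_le => ->; rewrite orbT. Qed.

Lemma lex_le_trans (m1 m2 m3 : 'X_{1..n}) :
  lex_le po m1 m2 -> lex_le po m2 m3 -> lex_le po m1 m3.
Proof.
move=> /orP[/eqP->//|h12] /orP[/eqP<-|h23]; first exact: lex_lt_le.
exact/lex_lt_le/(lex_lt_trans h12 h23).
Qed.

Lemma lex_le_anti (m1 m2 : 'X_{1..n}) :
  lex_le po m1 m2 -> lex_le po m2 m1 -> m1 = m2.
Proof.
move=> /orP[/eqP->//|h12] /orP[/eqP->//|h21].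
by move: (lex_lt_irr m1); rewrite (lex_lt_trans h12 h21).
Qed.

Lemma lex_le_total (m1 m2 : 'X_{1..n}) : lex_le po m1 m2 || lex_le po m2 m1.
Proof.
case: (eqVneq m1 m2) => [->|ne]; first by rewrite lex_le_refl.
by case/orP: (lex_lt_total ne) => /lex_lt_le ->; rewrite ?orbT.
Qed.

Lemma lex_le0m (m : 'X_{1..n}) : lex_le po 0%MM m.
Proof.
case: (eqVneq 0%MM m) => [->|ne]; first exact: lex_le_refl.
case/orP: (lex_lt_total ne) => [/lex_lt_le //|/existsP[i /andP[]]].
by rewrite mnm0E ltn0.
Qed.

Lemma lex_lt_addr (m1 m2 m : 'X_{1..n}) :
  lex_lt po m1 m2 -> lex_lt po (m1 + m)%MM (m2 + m)%MM.
Proof.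
case/existsP=> i /andP[lt /forallP eqm]; apply/existsP; exists i.
rewrite !mnmDE ltn_add2r lt; apply/forallP=> j; apply/implyP=> h.
by rewrite !mnmDE eqn_add2r (implyP (eqm j) h).
Qed.

End LexOrder.

Section LeadingMonomial.

Variables (K : fieldType) (P : seq pt) (po : rel pt).
Hypothesis poP : P_order P po.
Local Notation n := (nV P).
Local Notation poly := {mpoly K[nV P]}.

Lemma lmon_spec (f : poly) :
  (f != 0 -> lmon po f \in msupp f) /\
  (forall m, m \in msupp f -> lex_le po m (lmon po f)).
Proof.
rewrite -msupp_eq0 /lmon; elim: (msupp f) => [|x s [IHin IHle]] //=.
set r := foldr _ _ s; case: ifP => rx.
  split=> [|m]; rewrite ?mem_head // inE => /orP[/eqP->|ms].
    exact: lex_le_refl.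
  apply: (lex_le_trans poP (IHle _ ms) rx).
have s0 : s != [::] by apply: contraFN rx => /eqP s0; rewrite /r s0 lex_le0m.
have xr : lex_le po x r by case/orP: (lex_le_total poP r x); rewrite ?rx.
split=> [_|m]; first by rewrite inE IHin ?orbT.
by rewrite inE => /orP[/eqP->|/IHle].
Qed.

Lemma lmon_eq (f : poly) m0 :
  m0 \in msupp f -> (forall m, m \in msupp f -> lex_le po m m0) ->
  lmon po f = m0.
Proof.
move=> m0f m0max; have [lmf lmmax] := lmon_spec f.
have f0 : f != 0 by rewrite -msupp_eq0; apply: contraTneq m0f => ->.
exact: (lex_le_anti poP (m0max _ (lmf f0)) (lmmax _ m0f)).
Qed.

Lemma lmonZ (c : K) (f : poly) : c != 0 -> lmon po (c *: f) = lmon po f.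
Proof.
move=> c0; have [->|f0] := eqVneq f 0; first by rewrite scaler0.
have [lmf lmmax] := lmon_spec f; have eq_supp := perm_mem (msuppZ f c0).
by apply: lmon_eq => [|m]; rewrite eq_supp; [apply: lmf | apply: lmmax].
Qed.

Lemma lcoefZ (c : K) (f : poly) : c != 0 -> lcoef po (c *: f) = c * lcoef po f.
Proof. by move=> c0; rewrite /lcoef lmonZ // mcoeffZ. Qed.

Lemma spolyZl (c : K) (f g : poly) : c != 0 -> spoly po (c *: f) g = spoly po f g.
Proof.
move=> c0; rewrite /spoly lmonZ // lcoefZ // invfM -scalerAr scalerA.
by rewrite mulrAC mulVf // mul1r.
Qed.

Lemma spolyZr (c : K) (f g : poly) : c != 0 -> spoly po f (c *: g) = spoly po f g.
Proof.
move=> c0; rewrite /spoly lmonZ // lcoefZ // invfM -scalerAr scalerA.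
by rewrite mulrAC mulVf // mul1r.
Qed.

Lemma spolyNl (f g : poly) : spoly po (- f) g = spoly po f g.
Proof. by rewrite -scaleN1r spolyZl ?oppr_eq0 ?oner_eq0. Qed.

Lemma spolyNr (f g : poly) : spoly po f (- g) = spoly po f g.
Proof. by rewrite -scaleN1r spolyZr ?oppr_eq0 ?oner_eq0. Qed.

Lemma lmon_binomial (L T : 'X_{1..n}) :
  lex_lt po T L -> lmon po ('X_[L] - 'X_[T] : poly) = L.
Proof.
move=> TL; have LT : (T == L) = false.
  by apply: contraTF TL => /eqP->; apply: lex_lt_irr.
have coefE m : ('X_[L] - 'X_[T] : poly)@_m = (L == m)%:R - (T == m)%:R.
  by rewrite mcoeffB !mcoeffX.
apply: lmon_eq => [|m]; first by rewrite mcoeff_msupp coefE eqxx LT subr0 oner_eq0.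
rewrite mcoeff_msupp coefE; case: (eqVneq L m) => [<- _|_]; first exact: lex_le_refl.
by case: (eqVneq T m) => [<- _|_]; [apply: lex_lt_le | rewrite subrr eqxx].
Qed.

Lemma lcoef_binomial (L T : 'X_{1..n}) :
  lex_lt po T L -> lcoef po ('X_[L] - 'X_[T] : poly) = 1.
Proof.
move=> TL; rewrite /lcoef lmon_binomial // mcoeffB !mcoeffX eqxx.
by case: eqP TL => [->|_]; rewrite ?(negbTE (lex_lt_irr _ _)) ?subr0.
Qed.

Lemma lex_le_lmon_binomial (A B : 'X_{1..n}) : A != B ->
  lex_le po A (lmon po ('X_[A] - 'X_[B] : poly)) /\
  lex_le po B (lmon po ('X_[A] - 'X_[B] : poly)).
Proof.
case/(lex_lt_total poP)/orP => lt.
  rewrite -opprB -scaleN1r lmonZ ?oppr_eq0 ?oner_eq0 // lmon_binomial //.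
  by split; [apply: lex_lt_le | apply: lex_le_refl].
by rewrite lmon_binomial //; split; [apply: lex_le_refl | apply: lex_lt_le].
Qed.

Lemma spoly_binomial (L1 T1 L2 T2 : 'X_{1..n}) :
  lex_lt po T1 L1 -> lex_lt po T2 L2 ->
  spoly po ('X_[L1] - 'X_[T1] : poly) ('X_[L2] - 'X_[T2])
  = 'X_[mlcm L1 L2 - L2 + T2] - 'X_[mlcm L1 L2 - L1 + T1].
Proof.
move=> lt1 lt2; rewrite /spoly !lmon_binomial // !lcoef_binomial // invr1 !scale1r.
rewrite !mulrBr -!mpolyXD !submK ?lem_mlcml ?lem_mlcmr //.
by rewrite opprB addrC addrA subrK.
Qed.

End LeadingMonomial.

Section StandardExpressions.

Variables (K : fieldType) (P : seq pt) (po : rel pt).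
Hypothesis poP : P_order P po.
Local Notation n := (nV P).
Local Notation poly := {mpoly K[nV P]}.

Definition scalar_inG (g : poly) := exists2 c : K, c != 0 & inG (c *: g).

Lemma scalar_inGN (g : poly) : scalar_inG g -> scalar_inG (- g).
Proof.
case=> c c0 Gg; exists (- c); first by rewrite oppr_eq0.
by rewrite scaleNr scalerN opprK.
Qed.

Lemma mulVZ (c : K) (u g : poly) : c != 0 -> (c^-1 *: u) * (c *: g) = u * g.
Proof. by move=> c0; rewrite -scalerAl -scalerAr scalerA mulVf // scale1r. Qed.

Lemma reduces_to_zero_mul (u g : poly) :
  scalar_inG g -> reduces_to_zero po (u * g).
Proof.
case=> c c0 Gg; exists [:: (c^-1 *: u, c *: g)].
split=> [p|]; first by rewrite inE => /eqP->.
split=> [|p]; first by rewrite big_seq1 mulVZ.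
rewrite inE => /eqP-> /=; rewrite mulVZ //.
by have [->|ug0] := eqVneq (u * g) 0; [left | right; rewrite ug0 lex_le_refl].
Qed.

Lemma reduces_to_zero_spoly_coprime (L1 T1 L2 T2 : 'X_{1..n}) :
  lex_lt po T1 L1 -> lex_lt po T2 L2 -> mlcm L1 L2 = (L1 + L2)%MM ->
  scalar_inG ('X_[L1] - 'X_[T1] : poly) -> scalar_inG ('X_[L2] - 'X_[T2] : poly) ->
  reduces_to_zero po (spoly po ('X_[L1] - 'X_[T1] : poly) ('X_[L2] - 'X_[T2])).
Proof.
move=> lt1 lt2 lcmE [c1 c1_0 G1] [c2 c2_0 G2].
rewrite spoly_binomial // lcmE addmK [(L1 + L2)%MM]addmC addmK.
set S := _ - _; have [->|S0] := eqVneq S 0; first by exists [::]; rewrite big_nil.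
have /(lex_le_lmon_binomial K poP)[leS1 leS2] : (L1 + T2 != L2 + T1)%MM.
  by apply: contraNneq S0 => eqm; rewrite /S eqm subrr.
have mulXE (L T M : 'X_{1..n}) :
    'X_[M] * ('X_[L] - 'X_[T]) = 'X_[L + M] - 'X_[T + M] :> poly.
  by rewrite mulrBr -!mpolyXD !(addmC M).
exists [:: (c1^-1 *: 'X_[T2], c1 *: ('X_[L1] - 'X_[T1]));
          (c2^-1 *: - 'X_[T1], c2 *: ('X_[L2] - 'X_[T2]))].
split=> [p|]; first by rewrite !inE => /orP[] /eqP->.
split=> [|p].
  by rewrite big_cons big_seq1 !mulVZ // mulNr !mulXE (addmC T2) opprB addrA subrK.
rewrite !inE => /orP[] /eqP-> /=; rewrite mulVZ //; right; split=> //.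
  by rewrite mulXE lmon_binomial ?lex_lt_addr.
rewrite mulNr -scaleN1r lmonZ ?oppr_eq0 ?oner_eq0 //.
by rewrite mulXE lmon_binomial ?lex_lt_addr.
Qed.

(* With [U : uniq s], at most one [x \in s] equals [k]; split on all the
   tests [x == k] and let computation discard the impossible cases. *)
Ltac case_uniq U k :=
  move: (leq_trans (eq_leq (count_uniq_mem k U)) (leq_b1 _)) => /=;
  rewrite ?eqxx; repeat match goal with |- context[?x == k] => case: (x == k) end.

Ltac mnm_uniq U :=
  let k := fresh "k" in apply/mnmP; intro k;
  rewrite /mlcm ?(mnmE, mnmDE, mnmBE, mnm1E); case_uniq U k.

Lemma reduces_to_zero_spoly_2x3 (z0 z1 z2 w0 w1 w2 : 'I_n) :
  uniq [:: z0; z1; z2; w0; w1; w2] ->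
  scalar_inG ('X_z0 * 'X_w1 - 'X_z1 * 'X_w0 : poly) ->
  scalar_inG ('X_z0 * 'X_w2 - 'X_z2 * 'X_w0 : poly) ->
  scalar_inG ('X_z1 * 'X_w2 - 'X_z2 * 'X_w1 : poly) ->
  reduces_to_zero po
    (spoly po ('X_z0 * 'X_w1 - 'X_z1 * 'X_w0 : poly) ('X_z0 * 'X_w2 - 'X_z2 * 'X_w0)).
Proof.
move=> U; rewrite -!mpolyXD => Gf Gg Gh.
have /(lex_lt_total poP)/orP[lt1|lt1] : (U_(z0) + U_(w1) != U_(z1) + U_(w0))%MM.
  by apply/eqP => /mnmP/(_ z0); rewrite !mnmDE !mnm1E; case_uniq U z0.
all: have /(lex_lt_total poP)/orP[lt2|lt2] : (U_(z0) + U_(w2) != U_(z2) + U_(w0))%MM.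
all: try by apply/eqP => /mnmP/(_ z0); rewrite !mnmDE !mnm1E; case_uniq U z0.
- (* both leading terms contain x_w0, so S is x_z0 times the third minor *)
  rewrite -[X in spoly _ X]opprB -[X in spoly _ _ X]opprB (spolyNl poP) (spolyNr poP).
  rewrite spoly_binomial //.
  rewrite [X in 'X_[X] - _](_ : _ = U_(z0) + (U_(z1) + U_(w2)))%MM; last by mnm_uniq U.
  rewrite [X in _ - 'X_[X]](_ : _ = U_(z0) + (U_(z2) + U_(w1)))%MM; last by mnm_uniq U.
  by rewrite !mpolyXD -mulrBr -!mpolyXD; apply: reduces_to_zero_mul.
- rewrite -[X in spoly _ X]opprB (spolyNl poP).
  apply: reduces_to_zero_spoly_coprime => //; first by mnm_uniq U.
  by rewrite -opprB; apply: scalar_inGN.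
- rewrite -[X in spoly _ _ X]opprB (spolyNr poP).
  apply: reduces_to_zero_spoly_coprime => //; first by mnm_uniq U.
  by rewrite -opprB; apply: scalar_inGN.
- (* both leading terms contain x_z0, so S is - x_w0 times the third minor *)
  rewrite spoly_binomial //.
  rewrite [X in 'X_[X] - _](_ : _ = U_(w0) + (U_(z2) + U_(w1)))%MM; last by mnm_uniq U.
  rewrite [X in _ - 'X_[X]](_ : _ = U_(w0) + (U_(z1) + U_(w2)))%MM; last by mnm_uniq U.
  rewrite !mpolyXD -mulrBr -!mpolyXD; apply: reduces_to_zero_mul.
  by rewrite -opprB; apply: scalar_inGN.
Qed.

End StandardExpressions.

Section Rectangles.

Variables (K : fieldType) (P : seq pt) (po : rel pt).
Hypothesis poP : P_order P po.
Local Notation n := (nV P).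
Local Notation xv := (xvar K P).

Lemma xvarE v : v \in VP P -> exists2 i : 'I_n, vert_of i = v & xv v = 'X_i.
Proof.
move=> vP; rewrite /xvar; case: insubP => [i _ iE|]; last by rewrite index_mem vP.
by exists i; rewrite // /vert_of iE nth_index.
Qed.

Lemma reduces_to_zero_spoly_2x3_vertices (z0 z1 z2 w0 w1 w2 : pt) :
  all (mem (VP P)) [:: z0; z1; z2; w0; w1; w2] ->
  uniq [:: z0; z1; z2; w0; w1; w2] ->
  scalar_inG (xv z0 * xv w1 - xv z1 * xv w0) ->
  scalar_inG (xv z0 * xv w2 - xv z2 * xv w0) ->
  scalar_inG (xv z1 * xv w2 - xv z2 * xv w1) ->
  reduces_to_zero po (spoly po (xv z0 * xv w1 - xv z1 * xv w0)
                               (xv z0 * xv w2 - xv z2 * xv w0)).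
Proof.
rewrite /= andbT => /and5P[/xvarE[i0 <- ->] /xvarE[i1 <- ->] /xvarE[i2 <- ->]
  /xvarE[j0 <- ->] /andP[/xvarE[j1 <- ->] /xvarE[j2 <- ->]]] U.
by apply: reduces_to_zero_spoly_2x3; rewrite // -(map_inj_uniq (@vert_of_inj P)).
Qed.

(* The 2-minor of the rectangle with columns x, x' and rows y, y', given in
   any order; it is [fminor] of the interval up to sign. *)
Definition minor (x x' y y' : int) := fminor K P (x, y) (x', y').

Definition inner_rect (x x' y y' : int) :=
  inner_interval P (Num.min x x', Num.min y y') (Num.max x x', Num.max y y').

Lemma minorNl x x' y y' : minor x' x y y' = - minor x x' y y'.
Proof. by rewrite /minor /fminor /=; ring. Qed.

Lemma minorNr x x' y y' : minor x x' y' y = - minor x x' y y'.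
Proof. by rewrite /minor /fminor /=; ring. Qed.

Lemma inner_rect_swapx x x' y y' : inner_rect x' x y y' = inner_rect x x' y y'.
Proof. by rewrite /inner_rect minC maxC. Qed.

Lemma inner_rect_swapy x x' y y' : inner_rect x x' y' y = inner_rect x x' y y'.
Proof. by rewrite /inner_rect [Num.min y' _]minC [Num.max y' _]maxC. Qed.

Lemma inner_interval_rect x x' y y' :
  inner_interval P (x, y) (x', y') -> inner_rect x x' y y'.
Proof.
by move=> I; have [/= lt1 [lt2 _]] := I; rewrite /inner_rect !min_l ?max_r ?ltW.
Qed.

Lemma inner_rect_VP x x' y y' : inner_rect x x' y y' -> (x, y) \in VP P.
Proof.
case=> /= ltx [lty cellP]; rewrite /VP mem_undup; apply/flattenP.
pose v := (if x < x' then x else x - 1, if y < y' then y else y - 1).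
exists (cell_vertices v).
  by apply: map_f; apply: cellP; rewrite /v /=; repeat case: ifP => ?; lia.
rewrite /v !inE !xpair_eqE /=; by repeat case: ifP => _; rewrite ?subrK !eqxx ?orbT.
Qed.

Lemma inner_rect_corners_VP x x' y y' : inner_rect x x' y y' ->
  [/\ (x, y) \in VP P, (x, y') \in VP P, (x', y) \in VP P & (x', y') \in VP P].
Proof.
move=> R; split; first exact: inner_rect_VP R.
- by apply: (inner_rect_VP (x' := x') (y' := y)); rewrite inner_rect_swapy.
- by apply: (inner_rect_VP (x' := x) (y' := y')); rewrite inner_rect_swapx.
- apply: (inner_rect_VP (x' := x) (y' := y)).
  by rewrite inner_rect_swapx inner_rect_swapy.
Qed.

Lemma scalar_inG_minor x x' y y' :
  inner_rect x x' y y' -> scalar_inG (minor x x' y y').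
Proof.
wlog ltx : x x' / x < x'.
  move=> gen; case: (ltgtP x x') => [/gen//|ltx' R|<-].
    by rewrite minorNl; apply/scalar_inGN/gen; rewrite // inner_rect_swapx.
  by case; rewrite minxx maxxx ltxx.
wlog lty : y y' / y < y'.
  move=> gen; case: (ltgtP y y') => [/gen//|lty' R|<-].
    by rewrite minorNr; apply/scalar_inGN/gen; rewrite // inner_rect_swapy.
  by case=> _ []; rewrite minxx maxxx ltxx.
rewrite /inner_rect !min_l ?max_r ?ltW // => R.
by exists 1; rewrite ?oner_eq0 // scale1r; exists (x, y), (x', y').
Qed.

Lemma inner_rect_union_rows x x' e y y' :
  inner_rect x x' e y -> inner_rect x x' e y' -> y != y' -> inner_rect x x' y y'.
Proof.
case=> /= ltx [_ cellP] [_ [_ cellP']] yy'; split=> //=; split; first lia.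
move=> v x_le x_lt y_le y_lt.
have [v_in|v_out] := boolP ((Num.min e y <= v.2) && (v.2 < Num.max e y)).
  by case/andP: v_in; apply: cellP.
by apply: cellP' => /=; lia.
Qed.

Lemma inner_rect_union_cols x x' e y y' :
  inner_rect e x y y' -> inner_rect e x' y y' -> x != x' -> inner_rect x x' y y'.
Proof.
case=> /= _ [lty cellP] [_ [_ cellP']] xx'; split=> /=; first lia; split=> //.
move=> v x_le x_lt y_le y_lt.
have [v_in|v_out] := boolP ((Num.min e x <= v.1) && (v.1 < Num.max e x)).
  by case/andP: v_in => ? ?; apply: cellP.
by apply: cellP' => /=; lia.
Qed.

Lemma reduces_to_zero_spoly_common_cols x x' y1 y2 y3 y4 :
  inner_rect x x' y1 y2 -> inner_rect x x' y3 y4 ->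
  (y1 \in [:: y3; y4]) != (y2 \in [:: y3; y4]) ->
  reduces_to_zero po (spoly po (minor x x' y1 y2) (minor x x' y3 y4)).
Proof.
wlog y1_in : y1 y2 / y1 \in [:: y3; y4].
  move=> gen R12 R34 ne; have [y1_in|y1_out] := boolP (y1 \in [:: y3; y4]).
    exact: gen.
  have y2_in : y2 \in [:: y3; y4] by move: ne; rewrite (negbTE y1_out); case: (_ \in _).
  rewrite [minor x x' y1 y2]minorNr (spolyNl poP).
  by apply: gen; rewrite 1?eq_sym ?(inner_rect_swapy _ _ y1 y2).
wlog <- : y3 y4 y1_in / y1 = y3.
  move=> gen R12 R34 ne; have [y13|y13] := eqVneq y1 y3; first exact: gen.
  have y34 z : (z \in [:: y4; y3]) = (z \in [:: y3; y4]) by rewrite !inE orbC.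
  rewrite [minor x x' y3 y4]minorNr (spolyNr poP).
  apply: gen; rewrite ?y34 ?(inner_rect_swapy _ _ y3 y4) //.
  by move: y1_in; rewrite !inE (negbTE y13) => /eqP.
rewrite mem_head /= !inE negb_or => R1 R2 /andP[y21 y24].
have [[/= ltx _] [_ [/= lty _]]] := (R1, R2).
have [c11 c12 c21 c22] := inner_rect_corners_VP R1.
have [_ c14 _ c24] := inner_rect_corners_VP R2.
apply: (@reduces_to_zero_spoly_2x3_vertices
  (x, y1) (x, y2) (x, y4) (x', y1) (x', y2) (x', y4)).
- by rewrite /= c11 c12 c14 c21 c22 c24.
- by rewrite /= !inE !xpair_eqE; lia.
- exact: scalar_inG_minor R1.
- exact: scalar_inG_minor R2.
- exact: scalar_inG_minor (inner_rect_union_rows R1 R2 y24).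
Qed.

Lemma reduces_to_zero_spoly_common_rows x1 x2 x3 x4 y y' :
  inner_rect x1 x2 y y' -> inner_rect x3 x4 y y' ->
  (x1 \in [:: x3; x4]) != (x2 \in [:: x3; x4]) ->
  reduces_to_zero po (spoly po (minor x1 x2 y y') (minor x3 x4 y y')).
Proof.
wlog x1_in : x1 x2 / x1 \in [:: x3; x4].
  move=> gen R12 R34 ne; have [x1_in|x1_out] := boolP (x1 \in [:: x3; x4]).
    exact: gen.
  have x2_in : x2 \in [:: x3; x4] by move: ne; rewrite (negbTE x1_out); case: (_ \in _).
  rewrite [minor x1 x2 y y']minorNl (spolyNl poP).
  by apply: gen; rewrite 1?eq_sym ?(inner_rect_swapx x1 x2).
wlog x13 : x3 x4 x1_in / x1 = x3.
  move=> gen R12 R34 ne; have [x13|x13] := eqVneq x1 x3; first exact: gen.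
  have x34 z : (z \in [:: x4; x3]) = (z \in [:: x3; x4]) by rewrite !inE orbC.
  rewrite [minor x3 x4 y y']minorNl (spolyNr poP).
  apply: gen; rewrite ?x34 ?(inner_rect_swapx x3 x4) //.
  by move: x1_in; rewrite !inE (negbTE x13) => /eqP.
rewrite -{}x13 mem_head /= !inE negb_or => R1 R2 /andP[x21 x24].
have [[/= ltx _] [_ [/= lty _]]] := (R2, R1).
have [c11 c12 c21 c22] := inner_rect_corners_VP R1.
have [_ _ c41 c42] := inner_rect_corners_VP R2.
have minorE a b : minor a b y y' = xv (a, y) * xv (b, y') - xv (b, y) * xv (a, y').
  by rewrite /minor /fminor /= [xv (a, y') * _]mulrC.
rewrite !minorE; apply: reduces_to_zero_spoly_2x3_vertices; rewrite -?minorE.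
- by rewrite /= c11 c12 c21 c22 c41 c42.
- by rewrite /= !inE !xpair_eqE; lia.
- exact: scalar_inG_minor R1.
- exact: scalar_inG_minor R2.
- exact: scalar_inG_minor (inner_rect_union_cols R1 R2 x24).
Qed.

End Rectangles.

Lemma mem_corners (v p q : pt) :
  v \in [:: p; q; ul_corner p q; lr_corner p q] =
  (v.1 \in [:: p.1; q.1]) && (v.2 \in [:: p.2; q.2]).
Proof.
case: v p q => [v1 v2] [p1 p2] [q1 q2].
rewrite /ul_corner /lr_corner !inE !xpair_eqE /=.
by case: (v1 == p1); case: (v1 == q1); case: (v2 == p2); case: (v2 == q2).
Qed.

Lemma grid_count_eq2 (X1 X2 Y1 Y2 : bool) :
  ((X1 && Y1) + ((X2 && Y2) + ((X1 && Y2) + ((X2 && Y1) + 0))))%N = 2%N ->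
  X1 && X2 && (Y1 != Y2) || Y1 && Y2 && (X1 != X2).
Proof. by case: X1; case: X2; case: Y1; case: Y2. Qed.

Lemma two_common_corners (a b p q : pt) :
  a.1 < b.1 -> a.2 < b.2 -> p.1 < q.1 -> p.2 < q.2 ->
  size (undup [seq v <- [:: a; b; ul_corner a b; lr_corner a b]
                | v \in [:: p; q; ul_corner p q; lr_corner p q]]) = 2%N ->
  [/\ a.1 = p.1, b.1 = q.1 & (a.2 \in [:: p.2; q.2]) != (b.2 \in [:: p.2; q.2])] \/
  [/\ a.2 = p.2, b.2 = q.2 & (a.1 \in [:: p.1; q.1]) != (b.1 \in [:: p.1; q.1])].
Proof.
case: a b p q => [a1 a2] [b1 b2] [p1 p2] [q1 q2] ab1 ab2 pq1 pq2.
rewrite /= in ab1 ab2 pq1 pq2.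
rewrite undup_id; last first.
  by apply: filter_uniq; rewrite /ul_corner /lr_corner /= !inE !xpair_eqE; lia.
rewrite size_filter /= !mem_corners /=.
case/grid_count_eq2/orP=> /andP[/andP[X1 X2] ne]; rewrite !inE in X1 X2;
  [left|right]; split=> //; lia.
Qed.

Theorem mainTheorem1 (K : fieldType) (P : seq pt) (a b alpha beta : pt) :
  P != [::] ->
  inner_interval P a b ->
  inner_interval P alpha beta ->
  size (undup [seq x <- [:: a; b; ul_corner a b; lr_corner a b]
                 | x \in [:: alpha; beta; ul_corner alpha beta;
                             lr_corner alpha beta]]) = 2%N ->
  forall po : rel pt, P_order P po ->
    reduces_to_zero po (spoly po (fminor K P a b) (fminor K P alpha beta)).
Proof.
case: a b alpha beta => [a1 a2] [b1 b2] [p1 p2] [q1 q2] _ Iab Ipq corners po poP.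
have [[ab1 [ab2 _]] [pq1 [pq2 _]]] := (Iab, Ipq).
have Rab := inner_interval_rect Iab; have Rpq := inner_interval_rect Ipq.
have [[/= e1 e2 ne]|[/= e1 e2 ne]] := two_common_corners ab1 ab2 pq1 pq2 corners;
  subst p1 q1 || subst p2 q2.
- exact: (reduces_to_zero_spoly_common_cols K poP Rab Rpq ne).
- exact: (reduces_to_zero_spoly_common_rows K poP Rab Rpq ne).
Qed.
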